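(* Let $P\subseteq\{3,4,5,\ldots,\infty\}$. For all $A,B\in\mathcal{F}_P$ (when $\infty\in P$), respectively all $A,B\in\mathcal{G}_P$ (when $\infty\notin P$), there exists $C$ in the same family together with epimorphisms $f_1\colon C\to A$ and $f_2\colon C\to B$ belonging to that family.
   Context: Graphs are finite with reflexive symmetric edge relations. An epimorphism $f\colon B\to A$ is a surjection such that $\langle a_1,a_2\rangle$ is an edge of $A$ iff there are $b_i\in f^{-1}(a_i)$ forming an edge of $B$. It is monotone if every fibre $f^{-1}(a)$ induces a connected subgraph. A finite tree is a finite connected graph without cycles of nontrivial edges; $\mathrm{ord}(a)$ is the number of neighbours of $a$ other than $a$, equivalently the number of components of $A\setminus\{a\}$. For a monotone epimorphism $f\colon B\to A$ of finite trees and $a\in A$ with $\mathrm{ord}(a)=n\ge 3$, with $A_0,\dots,A_{n-1}$ the components of $A\setminus\{a\}$: $a$ is a point of weak coherence of $f$ (witnessed by $b$) if there is $b\in f^{-1}(a)$ with $m=\mathrm{ord}(b)\ge n$ and an injection $p\colon n\to m$ such that $f^{-1}(A_i)\subseteq B_{p(i)}$ for all $i$, where $B_0,\dots,B_{m-1}$ are the components of $B\setminus\{b\}$; it is a point of coherence if moreover $m=n$ and $p$ is a bijection. $f$ is coherent if every $a$ with $\mathrm{ord}(a)\ge3$ is a point of coherence. If $\infty\in P$, $\mathcal{F}_P$ consists of the finite trees with no vertex of order $2$, with epimorphisms $f\colon B\to A$ that are monotone, coherent at each $a$ with $\mathrm{ord}(a)\in P$, and, at each $a$ with $\mathrm{ord}(a)\ge3$,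 $\mathrm{ord}(a)\notin P$, weakly coherent with a witness $b$ satisfying $\mathrm{ord}(b)\notin P$. If $\infty\notin P$, $\mathcal{G}_P$ consists of the finite trees each of whose vertices is an endpoint (order at most $1$) or has order in $P$, with the monotone coherent epimorphisms. *)

From mathcomp Require Import all_boot.
Set Implicit Arguments. Unset Strict Implicit. Unset Printing Implicit Defensive.

Definition is_graph (T : finType) (e : rel T) : Prop :=
  reflexive e /\ symmetric e.

Definition ord (T : finType) (e : rel T) (a : T) : nat :=
  #|[set b | e a b & b != a]|.

Definition induced (T : finType) (e : rel T) (S : {set T}) : rel T :=
  fun x y => [&& x \in S, y \in S & e x y].

Definition connected_set (T : finType) (e : rel T) (S : {set T}) : Prop :=
  forall x y, x \in S -> y \in S -> connect (induced e S) x y.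

Definition is_tree (T : finType) (e : rel T) : Prop :=
  [/\ is_graph e, 0 < #|T|, connected_set e [set: T] &
      ~ exists s : seq T, [/\ uniq s, 2 < size s & cycle e s]].

Definition is_epi (TB TA : finType) (eB : rel TB) (eA : rel TA) (f : TB -> TA) : Prop :=
  (forall a, exists b, f b = a) /\
  (forall a1 a2, eA a1 a2 <-> exists b1 b2, [/\ f b1 = a1, f b2 = a2 & eB b1 b2]).

Definition monotone (TB TA : finType) (eB : rel TB) (f : TB -> TA) : Prop :=
  forall a, connected_set eB (f @^-1: [set a]).

Definition comps (T : finType) (e : rel T) (a : T) : {set {set T}} :=
  [set [set y | connect (induced e [set~ a]) x y] | x in [set~ a]].

Definition wcoh_witness (TB TA : finType) (eB : rel TB) (eA : rel TA)
    (f : TB -> TA) (a : TA) (b : TB) : Prop :=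
  [/\ f b = a, ord eA a <= ord eB b &
      exists p : {set TA} -> {set TB},
        [/\ {in comps eA a &, injective p},
            forall Ai, Ai \in comps eA a -> p Ai \in comps eB b &
            forall Ai, Ai \in comps eA a -> f @^-1: Ai \subset p Ai]].

Definition coh_witness (TB TA : finType) (eB : rel TB) (eA : rel TA)
    (f : TB -> TA) (a : TA) (b : TB) : Prop :=
  [/\ f b = a, ord eA a = ord eB b &
      exists p : {set TA} -> {set TB},
        [/\ {in comps eA a &, injective p},
            p @: comps eA a = comps eB b &
            forall Ai, Ai \in comps eA a -> f @^-1: Ai \subset p Ai]].

Definition weak_coh_point (TB TA : finType) (eB : rel TB) (eA : rel TA)
    (f : TB -> TA) (a : TA) : Prop :=
  3 <= ord eA a /\ exists b, wcoh_witness eB eA f a b.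

Definition coh_point (TB TA : finType) (eB : rel TB) (eA : rel TA)
    (f : TB -> TA) (a : TA) : Prop :=
  3 <= ord eA a /\ exists b, coh_witness eB eA f a b.

(* P ⊆ {3,4,5,...,∞} is encoded as [P : nat -> Prop] (its finite part,
   with P n -> 3 <= n) together with [infP : bool] (whether ∞ ∈ P). *)

(* Objects of F_P (infP = true) / G_P (infP = false). *)
Definition fam_obj (infP : bool) (P : nat -> Prop) (T : finType) (e : rel T) : Prop :=
  is_tree e /\
  (if infP then forall a, ord e a <> 2
   else forall a, ord e a <= 1 \/ P (ord e a)).

(* Morphisms of F_P (infP = true) / G_P (infP = false). *)
Definition fam_mor (infP : bool) (P : nat -> Prop) (TB TA : finType)
    (eB : rel TB) (eA : rel TA) (f : TB -> TA) : Prop :=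
  is_epi eB eA f /\ monotone eB f /\
  (if infP then
     (forall a, 3 <= ord eA a -> P (ord eA a) -> coh_point eB eA f a) /\
     (forall a, 3 <= ord eA a -> ~ P (ord eA a) ->
        exists b, wcoh_witness eB eA f a b /\ ~ P (ord eB b))
   else forall a, 3 <= ord eA a -> coh_point eB eA f a).

From mathcomp Require Import all_boot.
Set Implicit Arguments. Unset Strict Implicit. Unset Printing Implicit Defensive.

(* Trees with a single vertex are handled by identity and constant maps. Otherwise take a leaf
   a0 of A with neighbour a1 and a leaf b0 of B with neighbour b1, and glue A and B crosswise
   along these pendant edges, identifying a0 with b1 and a1 with b0. The result C is a tree in
   which every vertex has the order of a vertex of A or of B (a0 = b1 that of b1, a1 = b0 that
   of a1), so C lies in the family. The map C -> A that is the identity on A and collapses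
   B \ {b0} onto a0 is a monotone epimorphism, and around each vertex a of order at least 3 it
   is a local isomorphism: the components of C \ {a} are the preimages of those of A \ {a}.
   Hence every such a is a point of coherence, witnessed by its own copy in C. The map C -> B
   is obtained symmetrically. *)

Lemma homo_connect (T T' : finType) (r : rel T) (r' : rel T') (g : T -> T') :
  {homo g : x y / r x y >-> r' x y} ->
  {homo g : x y / connect r x y >-> connect r' x y}.
Proof.
move=> gr x _ /connectP [p rp ->]; apply/connectP.
by exists (map g p); [exact: homo_path rp | rewrite last_map].
Qed.

Section Graphs.
Variables (T : finType) (e : rel T).

Lemma induced_sym (S : {set T}) : symmetric e -> symmetric (induced e S).
Proof. by move=> se x y; rewrite /induced se andbCA. Qed.

Lemma connect_induced_mem (S : {set T}) u w :
  connect (induced e S) u w -> u != w -> w \in S.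
Proof.
move=> /connectP [p + ->]; case: p => [|y p]; rewrite ?eqxx //=.
case/andP=> /and3P [_ yS _] pS _; elim: p y yS pS => //= z p IHp y _.
by case/andP=> /and3P [_ zS _]; apply: IHp.
Qed.

Lemma connect_neighbour u w : connect e u w -> u != w -> exists2 y, e u y & y != u.
Proof.
move=> /connectP [p pe ->]; elim: p u pe => [|y p IHp] u /=; first by rewrite eqxx.
case/andP=> euy pe uw; have [yu|] := eqVneq y u; last by exists y.
by subst y; exact: IHp _ pe uw.
Qed.

Lemma connected_setT : connected_set e [set: T] <-> forall x y, connect e x y.
Proof.
split=> [ce x y | ce x y _ _]; first have := ce x y (in_setT _) (in_setT _).
  by apply: (@homo_connect _ _ _ _ id) => a b /and3P [].
by apply: (@homo_connect _ _ _ _ id) (ce x y) => a b eab; rewrite /induced !in_setT.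
Qed.

Lemma tree_connect : is_tree e -> forall x y, connect e x y.
Proof. by case=> _ _ /connected_setT. Qed.

Definition acyclic : Prop := ~ exists s : seq T, [/\ uniq s, 2 < size s & cycle e s].

Definition leaf_edge (x0 x1 : T) : Prop := [set y | e x0 y & y != x0] = [set x1].

Section LeafEdge.
Variables (x0 x1 : T).
Hypothesis leaf01 : leaf_edge x0 x1.

Lemma leaf_edge_adj : e x0 x1 /\ x1 != x0.
Proof. by have := set11 x1; rewrite -leaf01 inE => /andP. Qed.

Lemma leaf_edge_nb y : e x0 y -> y != x0 -> y = x1.
Proof. by move=> ey yx0; apply/set1P; rewrite -leaf01 inE ey yx0. Qed.

Lemma ord_leaf_edge : ord e x0 = 1.
Proof. by rewrite /ord leaf01 cards1. Qed.

Lemma ord_gt1_neq_leaf y : 1 < ord e y -> y != x0.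
Proof. by apply: contraTneq => ->; rewrite ord_leaf_edge. Qed.

(* A walk through the leaf x0 must return to x1 immediately, so x0 can be cut out. *)
Lemma connect_avoid_leaf u v : symmetric e -> u != x0 -> v != x0 ->
  connect e u v -> connect (induced e [set~ x0]) u v.
Proof.
move=> se ux0 vx0 /connectP [p pe ev]; subst v.
suff: connect (induced e [set~ x0]) u (if last u p == x0 then x1 else last u p).
  by rewrite (negbTE vx0).
elim/last_ind: p pe {vx0} => [|p z IHp] /=; first by rewrite (negbTE ux0) connect0.
rewrite rcons_path last_rcons => /andP [pe ez]; move: (IHp pe).
have [lx0|lx0] := eqVneq (last u p) x0; have [zx0|zx0] := eqVneq z x0 => //.
- by rewrite lx0 in ez; rewrite (leaf_edge_nb ez zx0).
- by rewrite zx0 se in ez; rewrite (leaf_edge_nb ez lx0).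
- move/connect_trans; apply; apply: connect1.
  by rewrite /induced !in_setC1 lx0 zx0 ez.
Qed.

End LeafEdge.

(* Index (size q).-2 is that of the predecessor of the endpoint of q. *)
Lemma acyclic_path_back (q : seq T) y :
  acyclic -> sorted e q -> uniq q -> y \in q -> e (last y q) y -> y != last y q ->
  index y q = (size q).-2.
Proof.
move=> acyc sq uq yq; case/splitPr: yq sq uq => p1 p2 sq uq.
rewrite last_cat /= => el nl.
have p2e : path e y p2.
  by case: p1 sq {uq} => //= z p1; rewrite cat_path => /andP [_ /andP []].
move: uq; rewrite cat_uniq => /and3P [_ yp1 uq2].
have {}yp1 : y \notin p1 by apply: contra yp1 => yp1; apply/hasP; exists y; rewrite ?mem_head.
suff p2_1 : size p2 = 1.
  by rewrite index_cat (negbTE yp1) /= eqxx size_cat /= p2_1 addn0 addn2.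
case: p2 p2e el nl uq2 {sq} => [|z [|w p2]] //=; first by rewrite eqxx.
move=> p2e el _ uq2; case: acyc; exists [:: y, z, w & p2]; split => //.
by rewrite /cycle rcons_path /= p2e.
Qed.

Lemma tree_leaf_edge : is_tree e -> 1 < #|T| -> exists x0 x1, leaf_edge x0 x1.
Proof.
move=> tree_e T2; have [_ _ _ acyc] := tree_e.
(* The endpoint of a longest simple path is a leaf. *)
pose long n := [exists x, exists t : n.-tuple T, uniq (x :: t) && path e x t].
have long_le n : long n -> n <= #|T|.
  case/existsP=> x /existsP [t /andP [ut _]].
  by have := max_card (mem (x :: t)); rewrite (card_uniqP ut) /= size_tuple => /ltnW.
have [u1 [u2 [_ _ u12]]] := card_gt1P T2.
have long1 : long 1.
  have [y euy yu] := connect_neighbour (tree_connect tree_e u1 u2) u12.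
  by apply/existsP; exists u1; apply/existsP; exists [tuple y]; rewrite /= inE eq_sym yu euy.
have [n /existsP [x /existsP [t /andP [ut pt]]] longest] :=
  ex_maxnP (ex_intro _ 1 long1) long_le.
set v := last x t.
have nb_on_path y : e v y -> y != v -> y \in x :: t.
  move=> ev yv; apply: contraT => yt.
  suff /longest : long n.+1 by rewrite ltnn.
  apply/existsP; exists x; apply/existsP.
  have szr : size (rcons t y) == n.+1 by rewrite size_rcons size_tuple.
  exists (Tuple szr); change (uniq (rcons (x :: t) y) && path e x (rcons t y)).
  by rewrite rcons_uniq yt ut rcons_path pt ev.
have nb_index y : e v y -> y != v -> index y (x :: t) = n.-1.
  move=> ev yv; have := acyclic_path_back (q := x :: t) acyc pt ut (nb_on_path y ev yv) ev yv.
  by rewrite /= size_tuple.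
have [z vz] : exists z, v != z.
  by have [<-|] := eqVneq u1 v; [exists u2 | exists u1; rewrite eq_sym].
have [w0 ew0 w0v] := connect_neighbour (tree_connect tree_e v z) vz.
exists v, w0; apply/setP => y; rewrite !inE; apply/andP/eqP => [[ey yv]|->] //.
rewrite -(nth_index x (nb_on_path y ey yv)) -(nth_index x (nb_on_path w0 ew0 w0v)).
by rewrite !nb_index.
Qed.

End Graphs.

Lemma sorted_side_const (T : eqType) (e : rel T) v (side : T -> bool) t :
  (forall c c', c != v -> c' != v -> e c c' -> side c = side c') ->
  sorted e t -> v \notin t -> {in t &, forall z z', side z = side z'}.
Proof.
move=> side_e; case: t => //= y p yp vt.
suff side_y : {in y :: p, forall z, side z = side y} by move=> z z' /side_y -> /side_y ->.
elim: p y yp vt => [|z p IHp] y; first by move=> _ _ z /[!inE] /eqP ->.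
rewrite /= => /andP [eyz zp] vyzp w.
have [vy vzp] : v != y /\ v \notin z :: p by move: vyzp; rewrite inE negb_or => /andP.
have yv : y != v by rewrite eq_sym.
have zv : z != v by apply: contraNneq vzp => ->; apply: mem_head.
rewrite inE => /predU1P [-> //|/(IHp z zp vzp) ->]; exact/esym/side_e.
Qed.

Lemma cycle_side_const (T : eqType) (e : rel T) v (side : T -> bool) s :
  (forall c c', c != v -> c' != v -> e c c' -> side c = side c') ->
  uniq s -> cycle e s -> {in [predD1 s & v] &, forall z z', side z = side z'}.
Proof.
move=> side_e us cs.
suff [t [te vt st]] : exists t, [/\ sorted e t, v \notin t & {subset [predD1 s & v] <= t}].
  by move=> z z' /st zt /st z't; apply: (sorted_side_const side_e te vt).
have [vs|vs] := boolP (v \in s); last first.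
  exists s; split => //; last by move=> z /andP [].
  by case: s cs {us vs} => //= y p; rewrite rcons_path => /andP [].
have [k t Et] := rot_to vs.
have : cycle e (v :: t) && uniq (v :: t) by rewrite -Et rot_cycle rot_uniq cs us.
rewrite /= rcons_path => /andP [/andP [/path_sorted te _] /andP [vt _]].
by exists t; split => // z /andP [zv]; rewrite -(mem_rot k) Et inE (negbTE zv).
Qed.

Lemma acyclic_codom (T T' : finType) (e : rel T) (e' : rel T') (g : T' -> T) :
  acyclic e' -> injective g -> (forall y y', e (g y) (g y') -> e' y y') ->
  forall s, {subset s <= codom g} -> uniq s -> 2 < size s -> ~~ cycle e s.
Proof.
move=> acyc ginj greflect s sg; have [s' ->] : exists s', s = map g s'.
  elim: s sg => [|z s IHs] sg; first by exists [::].
  have /codomP [y ->] := sg z (mem_head _ _).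
  have /IHs [s' ->] : {subset s <= codom g} by move=> w ws; apply: sg; rewrite inE ws orbT.
  by exists (y :: s').
rewrite (map_inj_uniq ginj) size_map cycle_map => us s2; apply/negP => cs.
by apply: acyc; exists s'; split => //; apply: sub_cycle cs.
Qed.

Lemma coh_witness_weak (TB TA : finType) (eB : rel TB) (eA : rel TA) (f : TB -> TA) a b :
  coh_witness eB eA f a b -> wcoh_witness eB eA f a b.
Proof.
case=> fb ord_ab [p [p_inj p_comps p_pre]]; split; rewrite ?ord_ab //.
by exists p; split => // Ai Ai_a; rewrite -p_comps imset_f.
Qed.

Section Gluing.
Variables (TA TX TC : finType) (eA : rel TA) (eX : rel TX) (eC : rel TC).
Variables (i : TA -> TC) (j : TX -> TC) (a0 a1 : TA) (x0 x1 : TX).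

(* C is A and X glued crosswise along the pendant edges a0a1 and x0x1 (a0 and x0 being the
   leaves): the leaf of each tree is identified with the inner end of the other's edge. *)
Record leaf_gluing : Prop := LeafGluing {
  gluing_injl : injective i;
  gluing_injr : injective j;
  gluing_a0 : i a0 = j x1;
  gluing_a1 : i a1 = j x0;
  gluing_overlap : forall a x, i a = j x -> (a = a0 /\ x = x1) \/ (a = a1 /\ x = x0);
  gluing_cover : forall c, (exists a, c = i a) \/ (exists x, c = j x);
  gluing_edge : forall c c', eC c c' <->
    (exists a a', [/\ c = i a, c' = i a' & eA a a']) \/
    (exists x x', [/\ c = j x, c' = j x' & eX x x'])}.

End Gluing.

Lemma leaf_gluing_sym (TA TX TC : finType) (eA : rel TA) (eX : rel TX) (eC : rel TC)
    (i : TA -> TC) (j : TX -> TC) a0 a1 x0 x1 :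
  leaf_gluing eA eX eC i j a0 a1 x0 x1 -> leaf_gluing eX eA eC j i x0 x1 a0 a1.
Proof.
case=> iI jI ia0 ia1 overlap cover edge; split => //.
- by move=> x a /esym /overlap [[-> ->]|[-> ->]]; [right | left].
- by move=> c; have [] := cover c; [right | left].
- move=> c c'; split => [/edge [] h | h]; [by right | by left | apply/edge].
  by case: h; [right | left].
Qed.

Section GluingEdges.
Variables (TA TX TC : finType) (eA : rel TA) (eX : rel TX) (eC : rel TC).
Variables (i : TA -> TC) (j : TX -> TC) (a0 a1 : TA) (x0 x1 : TX).
Hypotheses (graphA : is_graph eA) (leafA : leaf_edge eA a0 a1).
Hypothesis gluing : leaf_gluing eA eX eC i j a0 a1 x0 x1.

Lemma gluing_homl : {homo i : a a' / eA a a' >-> eC a a'}.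
Proof. by move=> a a' eaa'; apply/(gluing_edge gluing); left; exists a, a'. Qed.

(* An X-edge between two points of A joins a0 and a1, which are adjacent in A too. *)
Lemma gluing_monol : {mono i : a a' / eA a a' >-> eC a a'}.
Proof.
have [[reflA symA] [ea01 _]] := (graphA, leaf_edge_adj leafA).
have overlap a x : i a = j x -> a \in [:: a0; a1].
  by case/(gluing_overlap gluing) => -[-> _]; rewrite !inE eqxx ?orbT.
move=> a a'; apply/idP/idP; last exact: gluing_homl.
have iI := gluing_injl gluing.
case/(gluing_edge gluing) => [[b [b' [/iI <- /iI <- //]]]|].
case=> [x [x' [/overlap aA /overlap a'A _]]].
by move: aA a'A; rewrite !inE => /pred2P [] -> /pred2P [] ->; rewrite ?reflA // symA.
Qed.

End GluingEdges.

Section Glued.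
Variables (TA TX TC : finType) (eA : rel TA) (eX : rel TX) (eC : rel TC).
Variables (i : TA -> TC) (j : TX -> TC) (a0 a1 : TA) (x0 x1 : TX).
Hypotheses (treeA : is_tree eA) (treeX : is_tree eX).
Hypotheses (leafA : leaf_edge eA a0 a1) (leafX : leaf_edge eX x0 x1).
Hypothesis gluing : leaf_gluing eA eX eC i j a0 a1 x0 x1.

Let gluing' := leaf_gluing_sym gluing.
Let graphA : is_graph eA. Proof. by case: treeA. Qed.
Let graphX : is_graph eX. Proof. by case: treeX. Qed.
Let iI := gluing_injl gluing.
Let jI := gluing_injr gluing.
Let ia0 := gluing_a0 gluing.
Let ia1 := gluing_a1 gluing.
Let monoA := gluing_monol graphA leafA gluing.
Let monoX := gluing_monol graphX leafX gluing'.

Lemma glued_graph : is_graph eC.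
Proof.
have [[reflA symA] [reflX symX]] := (graphA, graphX).
split.
  move=> c; case: (gluing_cover gluing c) => [[a ->]|[x ->]].
    by rewrite monoA.
  by rewrite monoX.
apply: symmetric_from_pre => c c'.
case/(gluing_edge gluing) => [[a [a' [-> -> eaa']]]|[x [x' [-> -> exx']]]].
  by rewrite monoA symA.
by rewrite monoX symX.
Qed.

Lemma glued_connect c c' : connect eC c c'.
Proof.
suff to_a0 c'' : connect eC c'' (i a0).
  by apply: connect_trans (to_a0 c) _; rewrite (sym_connect_sym glued_graph.2).
case: (gluing_cover gluing c'') => [[a ->]|[x ->]].
  exact/(homo_connect (gluing_homl gluing))/tree_connect.
by rewrite ia0; exact/(homo_connect (gluing_homl gluing'))/tree_connect.
Qed.

Lemma glued_overlapE x : (j x \in codom i) = (x \in [:: x0; x1]).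
Proof.
apply/codomP/idP => [[a /esym /(gluing_overlap gluing)]|].
  by case=> -[_ ->]; rewrite !inE eqxx ?orbT.
by rewrite !inE => /pred2P [] ->; [exists a1 | exists a0]; rewrite ?ia0 ?ia1.
Qed.

(* i a0 = j x1 is a cut vertex of C: away from it, no edge leaves the image of i. *)
Lemma glued_side c c' : c != i a0 -> c' != i a0 -> eC c c' ->
  (c \in codom i) = (c' \in codom i).
Proof.
rewrite ia0 => cv c'v.
case/(gluing_edge gluing) => [[a [a' [-> -> _]]]|[x [x' [ec ec' exx']]]].
  by rewrite !codom_f.
move: cv c'v; rewrite {}ec {}ec' !(inj_eq jI) !glued_overlapE !inE.
move=> xx1 x'x1; rewrite (negbTE xx1) (negbTE x'x1) !orbF.
have [xx0|xx0] := eqVneq x x0; have [x'x0|x'x0] := eqVneq x' x0 => //; subst.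
- by rewrite (leaf_edge_nb leafX exx' x'x0) eqxx in x'x1.
- by rewrite graphX.2 in exx'; rewrite (leaf_edge_nb leafX exx' xx0) eqxx in xx1.
Qed.

Lemma glued_acyclic : acyclic eC.
Proof.
have [[_ _ _ acycA] [_ _ _ acycX]] := (treeA, treeX).
case=> s [us s2 cs].
have [sA|] := boolP (all (mem (codom i)) s).
  have reflA a a' : eC (i a) (i a') -> eA a a' by rewrite monoA.
  by move/negP: (acyclic_codom acycA iI reflA (allP sA) us s2).
rewrite -has_predC => /hasP [z0 z0s /= z0i].
have z0v : z0 != i a0 by apply: contraNneq z0i => ->; apply: codom_f.
have sX : {subset s <= codom j}.
  move=> z zs; have [->|zv] := eqVneq z (i a0); first by rewrite ia0 codom_f.
  have := cycle_side_const glued_side us cs; rewrite /prop_in2 => /(_ z z0).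
  rewrite !inE zv z0v zs z0s (negbTE z0i) => /(_ isT isT) /negbT zi.
  have [[a za]|[x ->]] := gluing_cover gluing z; last exact: codom_f.
  by rewrite za codom_f in zi.
have reflX x x' : eC (j x) (j x') -> eX x x' by rewrite monoX.
by move/negP: (acyclic_codom acycX jI reflX sX us s2).
Qed.

Lemma glued_tree : is_tree eC.
Proof.
split; [exact: glued_graph | | exact/connected_setT/glued_connect | exact: glued_acyclic].
by apply/card_gt0P; exists (i a0).
Qed.

Lemma ord_glued a : a != a0 -> ord eC (i a) = ord eA a.
Proof.
move=> aa0; rewrite /ord -(card_imset _ iI).
congr #|pred_of_set _|; apply/setP => c; rewrite inE.
apply/andP/imsetP => [[/(gluing_edge gluing) ec cia]|].
  case: ec => [[b [b' [/iI ab cb' eab']]]|[x [x' [iax cx' exx']]]]; subst.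
    by exists b' => //; rewrite inE eab'; apply: contraNneq cia => ->.
  have [[ea _]|[ea ex]] := gluing_overlap gluing iax; subst; first by rewrite eqxx in aa0.
  have [ea01 a10] := leaf_edge_adj leafA.
  have x'x0 : x' != x0 by apply: contraNneq cia => ->; rewrite ia1.
  exists a0; last by rewrite (leaf_edge_nb leafX exx' x'x0) ia0.
  by rewrite inE graphA.2 ea01 eq_sym a10.
case=> b /[!inE] /andP [eab ba] ->.
by rewrite monoA eab (inj_eq iI).
Qed.

Variable f : TC -> TA.
Hypotheses (fK : cancel i f) (f_r : forall x, x != x0 -> f (j x) = a0).

Lemma collapse_r_mem x : f (j x) \in [:: a0; a1].
Proof.
have [->|xx0] := eqVneq x x0; last by rewrite f_r ?mem_head.
by rewrite -ia1 fK !inE eqxx orbT.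
Qed.

Lemma collapse_hom : {homo f : c c' / eC c c' >-> eA c c'}.
Proof.
have [[reflA symA] [ea01 _]] := (graphA, leaf_edge_adj leafA).
move=> c c' /(gluing_edge gluing) [[a [a' [-> -> eaa']]]|[x [x' [-> -> _]]]].
  by rewrite !fK.
move: (collapse_r_mem x) (collapse_r_mem x').
by rewrite !inE => /pred2P [] -> /pred2P [] ->; rewrite ?reflA // symA.
Qed.

Lemma collapse_fibre a c : a != a0 -> f c = a -> c = i a.
Proof.
move=> aa0; case: (gluing_cover gluing c) => [[b ->]|[x ->]]; first by rewrite fK => ->.
have [->|xx0] := eqVneq x x0; first by rewrite -ia1 fK => ->.
by rewrite f_r // => a0a; rewrite a0a eqxx in aa0.
Qed.

Lemma collapse_epi : is_epi eC eA f.
Proof.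
split=> [a|a a']; first by exists (i a).
split=> [eaa'|[c [c' [<- <- /collapse_hom //]]]].
by exists (i a), (i a'); rewrite !fK monoA.
Qed.

Lemma collapse_monotone : monotone eC f.
Proof.
move=> a c c'; have [->|aa0] := eqVneq a a0; last first.
  by rewrite !inE => /eqP /(collapse_fibre aa0) -> /eqP /(collapse_fibre aa0) ->.
have fibre_a0 z : z \in f @^-1: [set a0] -> exists2 x, x != x0 & z = j x.
  rewrite !inE => /eqP; case: (gluing_cover gluing z) => [[b ->]|[x ->]].
    rewrite fK => ->; exists x1; rewrite ?ia0 //.
    exact: (leaf_edge_adj leafX).2.
  have [->|xx0] := eqVneq x x0; last by exists x.
  by rewrite -ia1 fK => a10; have [_] := leaf_edge_adj leafA; rewrite a10 eqxx.
move=> /fibre_a0 [x xx0 ->] /fibre_a0 [x' x'x0 ->].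
have := connect_avoid_leaf leafX graphX.2 xx0 x'x0 (tree_connect treeX x x').
apply: homo_connect => y y'.
rewrite /induced !inE => /and3P [yx0 y'x0 eyy'].
by rewrite !f_r // eqxx monoX.
Qed.

Section Coherence.
Variable a : TA.
Hypothesis ord_a : 3 <= ord eA a.

Let aa0 : a != a0 := ord_gt1_neq_leaf leafA (ltnW ord_a).

Lemma collapse_neq c : c != i a -> f c != a.
Proof. by apply: contra => /eqP /(collapse_fibre aa0) ->. Qed.

Lemma connect_collapse_section c :
  c != i a -> connect (induced eC [set~ i a]) c (i (f c)).
Proof.
case: (gluing_cover gluing c) => [[b ->]|[x ->]] cia; first by rewrite fK connect0.
have [->|xx0] := eqVneq x x0; first by rewrite -ia1 fK connect0.
rewrite f_r // ia0.
have jia y : y != x0 -> j y != i a.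
  apply: contraNneq => /esym /(gluing_overlap gluing) [[ea _]|[_ ->]] //.
  by move: aa0; rewrite ea eqxx.
have := connect_avoid_leaf leafX graphX.2 xx0 (leaf_edge_adj leafX).2.
move=> /(_ (tree_connect treeX x x1)).
apply: homo_connect => y y'; rewrite /induced !inE => /and3P [yx0 y'x0 eyy'].
by rewrite !jia // monoX.
Qed.

Lemma collapse_connect c c' : c != i a ->
  connect (induced eC [set~ i a]) c c' = connect (induced eA [set~ a]) (f c) (f c').
Proof.
have [reflC symC] := glued_graph.
move=> cia; apply/idP/idP.
  apply: homo_connect => y y' /and3P [yia y'ia eyy'].
  by rewrite /induced !in_setC1 !collapse_neq -?in_setC1 // collapse_hom.
move=> conn_A; have c'ia : c' != i a.
  apply: contraTneq conn_A => ->; rewrite fK; apply/negP => /connect_induced_mem.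
  by rewrite in_setC1 eqxx (collapse_neq cia) => /(_ isT).
have back := connect_collapse_section c'ia.
rewrite (sym_connect_sym (induced_sym _ symC)) in back.
apply: connect_trans (connect_collapse_section cia) (connect_trans _ back).
apply: homo_connect conn_A => y y' /and3P [ya y'a eyy'].
by rewrite /induced !in_setC1 !(inj_eq iI) -!in_setC1 ya y'a monoA.
Qed.

Lemma comps_collapse : (fun S : {set TA} => f @^-1: S) @: comps eA a = comps eC (i a).
Proof.
apply/setP => Z; apply/imsetP/imsetP => [[_ /imsetP [y ya ->] ->]|[c ca ->]].
  have iya : i y \in [set~ i a] by rewrite in_setC1 (inj_eq iI) -in_setC1.
  exists (i y) => //; apply/setP => c; rewrite !inE collapse_connect ?fK //.
  by rewrite -in_setC1.
have cia : c != i a by rewrite -in_setC1.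
exists [set z | connect (induced eA [set~ a]) (f c) z].
  by apply/imsetP; exists (f c); rewrite ?in_setC1 ?collapse_neq.
by apply/setP => c'; rewrite !inE collapse_connect.
Qed.

Lemma collapse_coh_witness : coh_witness eC eA f a (i a).
Proof.
split; rewrite ?fK ?ord_glued //.
exists (fun S : {set TA} => f @^-1: S); split; last by [].
  move=> S S' _ _ /setP eqSS'; apply/setP => y.
  by have := eqSS' (i y); rewrite !inE fK.
exact: comps_collapse.
Qed.

End Coherence.

Lemma collapse_fam_mor infP (P : nat -> Prop) : fam_mor infP P eC eA f.
Proof.
have coh a : 3 <= ord eA a -> coh_point eC eA f a.
  by move=> ord_a; split=> //; exists (i a); apply: collapse_coh_witness.
split; [exact: collapse_epi | split; first exact: collapse_monotone].
case: infP => //; split=> [a ord_a _ | a ord_a nPa]; first exact: coh.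
exists (i a); split; first exact/coh_witness_weak/collapse_coh_witness.
by rewrite (ord_glued (ord_gt1_neq_leaf leafA (ltnW ord_a))).
Qed.

End Glued.

Lemma ord_glued_cover (TA TX TC : finType) (eA : rel TA) (eX : rel TX) (eC : rel TC)
    (i : TA -> TC) (j : TX -> TC) a0 a1 x0 x1 :
  is_tree eA -> is_tree eX -> leaf_edge eA a0 a1 -> leaf_edge eX x0 x1 ->
  leaf_gluing eA eX eC i j a0 a1 x0 x1 ->
  forall c, (exists a, ord eC c = ord eA a) \/ (exists x, ord eC c = ord eX x).
Proof.
move=> treeA treeX leafA leafX gluing c.
have ord_l := ord_glued treeA leafA leafX gluing.
have ord_r := ord_glued treeX leafX leafA (leaf_gluing_sym gluing).
case: (gluing_cover gluing c) => [[a ->]|[x ->]].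
  have [->|aa0] := eqVneq a a0; last by left; exists a; apply: ord_l.
  by right; exists x1; rewrite (gluing_a0 gluing) ord_r ?(leaf_edge_adj leafX).2.
have [->|xx0] := eqVneq x x0; last by right; exists x; apply: ord_r.
by left; exists a1; rewrite -(gluing_a1 gluing) ord_l ?(leaf_edge_adj leafA).2.
Qed.

Lemma glued_fam_obj infP (P : nat -> Prop) (TA TX TC : finType) (eA : rel TA) (eX : rel TX)
    (eC : rel TC) (i : TA -> TC) (j : TX -> TC) a0 a1 x0 x1 :
  leaf_edge eA a0 a1 -> leaf_edge eX x0 x1 -> leaf_gluing eA eX eC i j a0 a1 x0 x1 ->
  fam_obj infP P eA -> fam_obj infP P eX -> fam_obj infP P eC.
Proof.
move=> leafA leafX gluing [treeA ordA] [treeX ordX].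
split; first exact: glued_tree treeA treeX leafA leafX gluing.
have ordC := ord_glued_cover treeA treeX leafA leafX gluing.
by case: infP ordA ordX => ordA ordX c; have [[a ->]|[x ->]] := ordC c.
Qed.

Section CrosswiseGluing.
Variables (TA TB : finType) (eA : rel TA) (eB : rel TB) (a0 a1 : TA) (b0 b1 : TB).
Hypotheses (a10 : a1 != a0) (b10 : b1 != b0).

Definition glued : finType := (TA + {b : TB | b \notin [:: b0; b1]})%type.

Definition glue_l (a : TA) : glued := inl a.

Definition glue_r (b : TB) : glued :=
  if insub b is Some s then inr s else inl (if b == b0 then a1 else a0).

Definition glued_rel : rel glued := fun c c' =>
  [exists a, exists a', [&& c == glue_l a, c' == glue_l a' & eA a a']] ||
  [exists b, exists b', [&& c == glue_r b, c' == glue_r b' & eB b b']].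

Definition proj_l (c : glued) : TA := if c is inl a then a else a0.

Definition proj_r (c : glued) : TB :=
  match c with inl a => if a == a0 then b1 else b0 | inr s => val s end.

Lemma glue_r_leaf b : b \in [:: b0; b1] -> glue_r b = inl (if b == b0 then a1 else a0).
Proof. by move=> bb; rewrite /glue_r insubF ?bb. Qed.

Lemma proj_lK : cancel glue_l proj_l. Proof. by []. Qed.

Lemma proj_rK : cancel glue_r proj_r.
Proof.
move=> b; case: (boolP (b \in [:: b0; b1])) => [bb|bb]; last by rewrite /glue_r insubT.
rewrite glue_r_leaf //=; move: bb; rewrite !inE => /pred2P [] ->.
  by rewrite eqxx (negbTE a10).
by rewrite (negbTE b10) eqxx.
Qed.

Lemma proj_l_r b : b != b0 -> proj_l (glue_r b) = a0.
Proof.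
move=> bb0; case: (boolP (b \in [:: b0; b1])) => [bb|bb]; last by rewrite /glue_r insubT.
by rewrite glue_r_leaf //= (negbTE bb0).
Qed.

Lemma proj_r_l a : a != a0 -> proj_r (glue_l a) = b0.
Proof. by move=> aa0; rewrite /= (negbTE aa0). Qed.

Lemma glued_leaf_gluing : leaf_gluing eA eB glued_rel glue_l glue_r a0 a1 b0 b1.
Proof.
split.
- exact: can_inj proj_lK.
- exact: can_inj proj_rK.
- by rewrite glue_r_leaf ?(negbTE b10) // !inE eqxx orbT.
- by rewrite glue_r_leaf ?eqxx // mem_head.
- move=> a b; case: (boolP (b \in [:: b0; b1])) => [bb|bb]; last by rewrite /glue_r insubT.
  rewrite glue_r_leaf //; move: bb; rewrite !inE => /pred2P [] -> [->].
    by rewrite eqxx; right.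
  by rewrite (negbTE b10); left.
- case=> [a|s]; first by left; exists a.
  by right; exists (val s); rewrite /glue_r valK.
- move=> c c'; split.
    by case/orP => /existsP [u /existsP [u' /and3P [/eqP -> /eqP -> ?]]]; [left | right];
      exists u, u'.
  case=> -[u [u' [-> -> ?]]]; apply/orP; [left | right];
    by apply/existsP; exists u; apply/existsP; exists u'; rewrite !eqxx.
Qed.

Lemma crosswise_gluing : exists (TC : finType) (eC : rel TC) (i : TA -> TC) (j : TB -> TC)
    (f : TC -> TA) (g : TC -> TB),
  [/\ leaf_gluing eA eB eC i j a0 a1 b0 b1,
      cancel i f /\ (forall b, b != b0 -> f (j b) = a0) &
      cancel j g /\ (forall a, a != a0 -> g (i a) = b0)].
Proof.
exists glued, glued_rel, glue_l, glue_r, proj_l, proj_r.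
split; [exact: glued_leaf_gluing | split | split].
- exact: proj_lK.
- exact: proj_l_r.
- exact: proj_rK.
- exact: proj_r_l.
Qed.

End CrosswiseGluing.

Lemma id_fam_mor infP (P : nat -> Prop) (T : finType) (e : rel T) : fam_mor infP P e e id.
Proof.
have coh a : coh_witness e e id a a.
  split=> //; exists id; split; [by [] | exact: imset_id |].
  by move=> S _; apply/subsetP => x /[!inE].
split; [split | split].
- by move=> a; exists a.
- by move=> a a'; split => [eaa'|[b [b' [<- <- //]]]]; exists a, a'.
- by move=> a c c'; rewrite !inE => /eqP -> /eqP ->.
case: infP => [|a a3]; last by split=> //; exists a.
split=> [a a3 _ | a a3 nPa]; first by split=> //; exists a.
by exists a; split=> //; apply/coh_witness_weak/coh.
Qed.

Lemma const_fam_mor infP (P : nat -> Prop) (TC TA : finType) (eC : rel TC) (eA : rel TA) a :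
  is_tree eC -> reflexive eA -> #|TA| <= 1 -> fam_mor infP P eC eA (fun=> a).
Proof.
move=> [[reflC _] /card_gt0P [c0 _] /connected_setT connC _] reflA /fintype_le1P TA1.
have ord0 y : ord eA y = 0.
  by apply/eqP; rewrite cards_eq0; apply/eqP/setP => z; rewrite !inE (TA1 y z) eqxx andbF.
split; [split | split].
- by move=> y; exists c0; rewrite (TA1 a y).
- move=> y y'; split => [_|[c [c' [<- <- _]]] //].
  by exists c0, c0; rewrite (TA1 a y) (TA1 a y') reflC.
- move=> y c c' _ _; apply: (@homo_connect _ _ _ _ id) (connC c c') => z z' ezz'.
  by rewrite /induced !inE (TA1 a y) eqxx.
by case: infP => [|y]; rewrite ?ord0 //; split=> y; rewrite ord0.
Qed.

Theorem mainTheorem4 (infP : bool) (P : nat -> Prop)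
    (HP : forall n, P n -> 3 <= n)
    (TA : finType) (eA : rel TA) (TB : finType) (eB : rel TB) :
  fam_obj infP P eA -> fam_obj infP P eB ->
  exists (TC : finType) (eC : rel TC) (f1 : TC -> TA) (f2 : TC -> TB),
    [/\ fam_obj infP P eC, fam_mor infP P eC eA f1 & fam_mor infP P eC eB f2].
Proof.
move=> objA objB; have [[treeA _] [treeB _]] := (objA, objB).
have [A1|A2] := leqP #|TA| 1.
  have [_ /card_gt0P [a _] _ _] := treeA.
  exists TB, eB, (fun=> a), id; split=> //; last exact: id_fam_mor.
  by apply: const_fam_mor A1; case: treeA => -[].
have [B1|B2] := leqP #|TB| 1.
  have [_ /card_gt0P [b _] _ _] := treeB.
  exists TA, eA, id, (fun=> b); split=> //; first exact: id_fam_mor.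
  by apply: const_fam_mor B1; case: treeB => -[].
have [a0 [a1 leafA]] := tree_leaf_edge treeA A2.
have [b0 [b1 leafB]] := tree_leaf_edge treeB B2.
have [a10 b10] := ((leaf_edge_adj leafA).2, (leaf_edge_adj leafB).2).
have [TC [eC [i [j [f [g [gluing [fK f_r] [gK g_l]]]]]]]] := crosswise_gluing eA eB a10 b10.
exists TC, eC, f, g; split.
- exact: glued_fam_obj leafA leafB gluing objA objB.
- exact: (collapse_fam_mor treeA treeB leafA leafB gluing fK f_r).
- exact: (collapse_fam_mor treeB treeA leafB leafA (leaf_gluing_sym gluing) gK g_l).
Qed.
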